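(* Let $\langle A;\cdot\rangle$ be a semigroup which is an Abelian algebra. Then $\langle A;\cdot\rangle$ is a Hamiltonian algebra if and only if $\langle A;\cdot\rangle$ is an inflation of a subsemigroup which is a rectangular band of periodic commutative groups, and the product of any two idempotents of $A$ is an idempotent.
   Context: A semigroup $\langle T;\cdot\rangle$ is a rectangular band of semigroups $T_{i\lambda}$ if $\{T_{i\lambda}\mid i\in I,\lambda\in\Lambda\}$ is a partition of $T$ into subsemigroups with $T_{i\lambda}\cdot T_{j\mu}\subseteq T_{i\mu}$ for all $i,j\in I$, $\lambda,\mu\in\Lambda$; it is a rectangular band of periodic commutative groups if each $\langle T_{i\lambda};\cdot\rangle$ is a commutative group all of whose elements have finite order. A semigroup $\langle A;\cdot\rangle$ is an inflation of a subsemigroup $\langle B;\cdot\rangle$ if there is a partition $\{X_b\mid b\in B\}$ of $A$ with $b\in X_b$ and $x\cdot y=a\cdot b$ for all $a,b\in B$, $x\in X_a$, $y\in X_b$. An idempotent is $e$ with $ee=e$. A polynomial operation of an algebra is an operation obtained from a term by substituting elements of the algebra for some of its variables. An algebra is called Abelian if for every polynomial operation $t(x,y_1,\ldots,y_n)$ and all elements $u,v,c_1,\ldots,c_n,d_1,\ldots,d_n$ of the algebra, $t(u,c_1,\ldots,c_n)=t(u,d_1,\ldots,d_n)$ implies $t(v,c_1,\ldots,c_n)=t(v,d_1,\ldots,d_n)$. Subalgebras of a semigroup are its nonempty subsets closed under $\cdot$; an algebra is called Hamiltonian if the universe of every subalgebra is an equivalence class (block) of some congruence of the algebra. *)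

From Stdlib Require Import Arith.

Set Implicit Arguments.

Definition associative (A : Type) (op : A -> A -> A) : Prop :=
  forall x y z, op x (op y z) = op (op x y) z.

(* x ^ (n+1) *)
Fixpoint spow (A : Type) (op : A -> A -> A) (x : A) (n : nat) : A :=
  match n with
  | O => x
  | S k => op (spow op x k) x
  end.

(* Polynomial operations: terms in variables (indexed by nat) with
   constants from A. *)
Inductive pterm (A : Type) : Type :=
| PVar : nat -> pterm A
| PCst : A -> pterm A
| PMul : pterm A -> pterm A -> pterm A.

Fixpoint peval (A : Type) (op : A -> A -> A) (env : nat -> A) (t : pterm A) : A :=
  match t with
  | PVar _ n => env n
  | PCst a => a
  | PMul t1 t2 => op (peval op env t1) (peval op env t2)
  end.

(* environment sending variable 0 (x) to u and variable (k+1) (y_{k+1}) to c k *)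
Definition scons (A : Type) (u : A) (c : nat -> A) : nat -> A :=
  fun i => match i with O => u | S k => c k end.

Definition abelian_alg (A : Type) (op : A -> A -> A) : Prop :=
  forall (t : pterm A) (u v : A) (c d : nat -> A),
    peval op (scons u c) t = peval op (scons u d) t ->
    peval op (scons v c) t = peval op (scons v d) t.

Definition congruence (A : Type) (op : A -> A -> A) (R : A -> A -> Prop) : Prop :=
  (forall x, R x x) /\ (forall x y, R x y -> R y x) /\
  (forall x y z, R x y -> R y z -> R x z) /\
  (forall x x' y y', R x x' -> R y y' -> R (op x y) (op x' y')).

Definition subalgebra (A : Type) (op : A -> A -> A) (B : A -> Prop) : Prop :=
  (exists b, B b) /\ (forall x y, B x -> B y -> B (op x y)).

Definition hamiltonian (A : Type) (op : A -> A -> A) : Prop :=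
  forall B : A -> Prop, subalgebra op B ->
    exists (R : A -> A -> Prop) (a : A),
      congruence op R /\ forall x, B x <-> R a x.

(* The subsemigroup T (a predicate on A) is a rectangular band of periodic
   commutative groups: T is partitioned into blocks
   T_{i,l} = {x in T | fi x = i /\ fl x = l}, (i,l) in I x L, with
   T_{i,l} T_{j,m} included in T_{i,m}, and each block a periodic commutative
   group under op. *)
Definition rect_band_pcgroups (A : Type) (op : A -> A -> A) (T : A -> Prop) : Prop :=
  exists (I L : Type) (fi : A -> I) (fl : A -> L),
    (forall x y, T x -> T y -> fi (op x y) = fi x /\ fl (op x y) = fl y) /\
    (forall (i : I) (l : L),
       let blk := fun x => T x /\ fi x = i /\ fl x = l in
       exists e, blk e /\
         (forall x, blk x -> op e x = x /\ op x e = x) /\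
         (forall x, blk x -> exists y, blk y /\ op x y = e /\ op y x = e) /\
         (forall x y, blk x -> blk y -> op x y = op y x) /\
         (forall x, blk x -> exists n, spow op x n = e)).

(* A is an inflation of the subsemigroup B: partition {X_b | b in B} of A,
   given by r : A -> A with X_b = r^{-1}(b), b in X_b, and
   x * y = a * b for x in X_a, y in X_b. *)
Definition inflation_of (A : Type) (op : A -> A -> A) (B : A -> Prop) : Prop :=
  exists r : A -> A,
    (forall x, B (r x)) /\ (forall b, B b -> r b = b) /\
    (forall x y, op x y = op (r x) (r y)).

Definition idempotent (A : Type) (op : A -> A -> A) (e : A) : Prop := op e e = e.

(* In an Abelian semigroup [u x = u y] implies [v x = v y]; in particular an
   idempotent [g] can be inserted freely, [v z = v (g z)], which already makes
   products of idempotents idempotent.  Both sides of the equivalence amount to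
   periodicity.  A Hamiltonian semigroup is periodic, and conversely let [A] be
   periodic with idempotent powers [x^ω].  Then [A A] is the union of the
   periodic commutative groups [{x ∈ A A | x^ω = e}], [x ↦ x x^ω] is an
   inflation retraction onto [A A], and [x ↦ (x^ω f, f x^ω)] indexes a
   rectangular band.  For Hamiltonicity, using inverses [x^(2ω+1)] and the
   identity [s p q t = s q p t] (the middle factors land in the commutative
   local monoid [eAe]), any two elements of a subsemigroup [C] are
   interchangeable in every context [s _ t] that lands in [C], so [C] is a
   class of its syntactic congruence. *)

From Stdlib Require Import Arith Lia ProofIrrelevance IndefiniteDescription.

Section Semigroup.

Variables (A : Type) (op : A -> A -> A).
Local Notation "x · y" := (op x y) (at level 40, left associativity).

Lemma spow_idem e n : idempotent op e -> spow op e n = e.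
Proof.
  intro He. induction n as [|n IH]; cbn; [reflexivity|]. now rewrite IH.
Qed.

Lemma spow_closed (P : A -> Prop) x n :
  (forall a b, P a -> P b -> P (a · b)) -> P x -> P (spow op x n).
Proof. intros Hcl Hx. induction n as [|n IH]; cbn; auto. Qed.

Hypothesis mulA : forall x y z, x · (y · z) = x · y · z.

Lemma spowD x a b : spow op x (a + S b) = spow op x a · spow op x b.
Proof.
  induction b as [|b IH].
  - now rewrite Nat.add_1_r.
  - rewrite Nat.add_succ_r; cbn [spow]. now rewrite IH, mulA.
Qed.

Lemma spowS_l x n : x · spow op x n = spow op x (S n).
Proof. exact (eq_sym (spowD x 0 n)). Qed.

Lemma spow_fix_l e x n : e · x = x -> e · spow op x n = spow op x n.
Proof.
  intro Hx. induction n as [|n IH]; cbn; [exact Hx|]. now rewrite mulA, IH.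
Qed.

Lemma spow_fix_r e x n : x · e = x -> spow op x n · e = spow op x n.
Proof.
  intro Hx. induction n as [|n IH]; cbn; [exact Hx|]. now rewrite <- mulA, Hx.
Qed.

Lemma spow_sq x n : spow op (x · x) n = spow op x (n + S n).
Proof.
  induction n as [|n IH]; [reflexivity|].
  replace (S n + S (S n)) with (S (S (n + S n))) by lia.
  cbn [spow]. now rewrite IH, mulA.
Qed.

Lemma idempotent_spow_of_cycle x i k :
  spow op x i = spow op x (i + S k) -> exists n, idempotent op (spow op x n).
Proof.
  intro Hcyc.
  assert (Hshift : forall t, spow op x (i + t) = spow op x (i + t + S k)).
  { induction t as [|t IH]; [now rewrite Nat.add_0_r|].
    replace (i + S t + S k) with (S (i + t + S k)) by lia.
    rewrite Nat.add_succ_r. cbn [spow]. now rewrite IH. }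
  assert (Hperiod : forall q t, spow op x (i + t + q * S k) = spow op x (i + t)).
  { induction q as [|q IH]; intro t; [now rewrite Nat.add_0_r|].
    replace (i + t + S q * S k) with (i + (t + S k) + q * S k) by lia.
    rewrite IH, Nat.add_assoc. symmetry. apply Hshift. }
  exists (i * S k + k). unfold idempotent. rewrite <- spowD.
  replace (i * S k + k + S (i * S k + k)) with (i + (i * k + k) + S i * S k) by nia.
  rewrite Hperiod. f_equal. nia.
Qed.

(* In the block of {a^3} ∪ {a^n | n >= 5}, a^3 ~ a^5 gives a^4 ~ a^6, so a^4 is in the block. *)
Lemma hamiltonian_idempotent_power :
  hamiltonian op -> forall a, exists n, idempotent op (spow op a n).
Proof.
  intros Ham a.
  pose (C := fun z => z = spow op a 2 \/ exists n, z = spow op a (4 + n)).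
  assert (HC : subalgebra op C).
  { split; [exists (spow op a 2); now left|].
    intros x y [->|[n ->]] [->|[n' ->]]; rewrite <- spowD; right.
    - now exists 1.
    - exists (3 + n'). f_equal; lia.
    - exists (3 + n). f_equal; lia.
    - exists (5 + n + n'). f_equal; lia. }
  destruct (Ham C HC) as [R [c [[Rrefl [Rsym [Rtrans Rmul]]] HR]]].
  assert (H35 : R (spow op a 2) (spow op a 4)).
  { apply Rtrans with c; [apply Rsym|]; apply HR; [now left | right; now exists 0]. }
  assert (H46 : R (spow op a 3) (spow op a 5)).
  { pose proof (Rmul a a _ _ (Rrefl a) H35) as H. now rewrite 2!spowS_l in H. }
  assert (C4 : C (spow op a 3)).
  { apply HR. apply Rtrans with (spow op a 5); [|now apply Rsym].
    apply HR. right. now exists 1. }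
  destruct C4 as [H|[n H]].
  - now apply (idempotent_spow_of_cycle a 2 0).
  - now apply (idempotent_spow_of_cycle a 3 n).
Qed.

Definition ctx (s : option A) (x : A) (t : option A) : A :=
  let y := match s with Some a => a · x | None => x end in
  match t with Some b => y · b | None => y end.

Definition syntactic (C : A -> Prop) (x y : A) : Prop :=
  forall s t, C (ctx s x t) <-> C (ctx s y t).

Lemma syntactic_congruence C : congruence op (syntactic C).
Proof.
  split; [|split; [|split]].
  - intros x s t. reflexivity.
  - intros x y H s t. now symmetry.
  - intros x y z H1 H2 s t. now rewrite (H1 s t).
  - intros x x' y y' H1 H2 s t.
    assert (Er : forall z, ctx s (z · y) t = ctx s z (Some (ctx None y t))).
    { intro z. destruct s, t; cbn; now rewrite ?mulA. }
    assert (El : forall z, ctx s (x' · z) t = ctx (Some (ctx s x' None)) z t).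
    { intro z. destruct s, t; cbn; now rewrite ?mulA. }
    rewrite Er, (H1 _ _), <- Er, El, (H2 _ _), <- El. reflexivity.
Qed.

Lemma hamiltonian_of_syntactic :
  (forall C, subalgebra op C -> forall c c' s t,
     C c -> C c' -> C (ctx s c t) -> C (ctx s c' t)) ->
  hamiltonian op.
Proof.
  intros Hctx C HC. destruct HC as [[a Ca] Ccl].
  exists (syntactic C), a. split; [apply syntactic_congruence|].
  intro x. split.
  - intros Cx s t. split; apply Hctx; auto; split; eauto.
  - intro H. exact (proj1 (H None None) Ca).
Qed.

Definition periodic_comm_group (G : A -> Prop) : Prop :=
  exists e, G e /\
    (forall x, G x -> e · x = x /\ x · e = x) /\
    (forall x, G x -> exists y, G y /\ x · y = e /\ y · x = e) /\
    (forall x y, G x -> G y -> x · y = y · x) /\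
    (forall x, G x -> exists n, spow op x n = e).

Lemma periodic_comm_group_ext (G G' : A -> Prop) :
  (forall x, G x <-> G' x) -> periodic_comm_group G -> periodic_comm_group G'.
Proof.
  intros HG [e [Ge [Hid [Hinv [Hcomm Hper]]]]].
  exists e; split; [now apply HG|].
  split; [intros x Hx; apply Hid, HG, Hx|].
  split; [|split].
  - intros x Hx. destruct (Hinv x (proj2 (HG x) Hx)) as [y [Gy Hy]].
    exists y. split; [apply HG|]; assumption.
  - intros x y Hx Hy. apply Hcomm; apply HG; assumption.
  - intros x Hx. apply Hper, HG, Hx.
Qed.

Lemma sig_eq_iff (X : Type) (P : X -> Prop) (u v : sig P) :
  u = v <-> proj1_sig u = proj1_sig v.
Proof.
  split; [now intros ->|].
  destruct u as [a pa], v as [b pb]; cbn. apply subset_eq_compat.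
Qed.

(* The index sets are the images of [fi] and [fl], so that no block is empty. *)
Lemma rect_band_pcgroups_of_index (X Y : Type) (T : A -> Prop)
    (fi : A -> X) (fl : A -> Y) :
  (forall x y, T x -> T y -> T (x · y)) ->
  (forall x, exists y, T y /\ fi y = fi x /\ fl y = fl x) ->
  (forall x y, T x -> T y -> fi (x · y) = fi x /\ fl (x · y) = fl y) ->
  (forall z, T z -> periodic_comm_group (fun x => T x /\ fi x = fi z /\ fl x = fl z)) ->
  rect_band_pcgroups op T.
Proof.
  intros Tcl Hrepr Hmul Hblock.
  pose (fi' := fun x => exist (fun i => exists y, fi y = i) (fi x) (ex_intro _ x eq_refl)).
  pose (fl' := fun x => exist (fun l => exists y, fl y = l) (fl x) (ex_intro _ x eq_refl)).
  exists {i | exists y, fi y = i}, {l | exists y, fl y = l}, fi', fl'.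
  split.
  - intros x y Tx Ty. destruct (Hmul x y Tx Ty) as [Hi Hl].
    split; apply sig_eq_iff; assumption.
  - intros i l.
    enough (H : periodic_comm_group (fun x => T x /\ fi' x = i /\ fl' x = l)) by exact H.
    destruct i as [i [x1 Hx1]], l as [l [x2 Hx2]].
    destruct (Hrepr x1) as [y1 [Ty1 [Hy1 _]]], (Hrepr x2) as [y2 [Ty2 [_ Hy2]]].
    destruct (Hmul y1 y2 Ty1 Ty2) as [Hzi Hzl].
    apply periodic_comm_group_ext with (fun x => T x /\ fi x = fi (y1 · y2) /\ fl x = fl (y1 · y2));
      [|now apply Hblock, Tcl].
    intro x. rewrite 2!sig_eq_iff; cbn. rewrite Hzi, Hzl, Hy1, Hy2, Hx1, Hx2. reflexivity.
Qed.

Definition prods (x : A) : Prop := exists a b, x = a · b.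

Lemma prods_mul x y : prods (x · y).
Proof. now exists x, y. Qed.

Lemma subalgebra_prods (c : A) : subalgebra op prods.
Proof. split; [exists (c · c)|intros]; apply prods_mul. Qed.

Lemma idempotent_power_of_band_inflation (B : A -> Prop) :
  (forall x y, B x -> B y -> B (x · y)) ->
  inflation_of op B -> rect_band_pcgroups op B ->
  forall x, exists n, idempotent op (spow op x n).
Proof.
  intros Bcl [r [Br [_ Hr]]] [I [L [fi [fl [_ Hblk]]]]] x.
  assert (Bxx : B (x · x)) by (rewrite Hr; apply Bcl; apply Br).
  destruct (Hblk (fi (x · x)) (fl (x · x))) as [e [Ge [Hid [_ [_ Hper]]]]].
  destruct (Hper (x · x) (conj Bxx (conj eq_refl eq_refl))) as [n Hn].
  exists (n + S n). unfold idempotent. rewrite <- spow_sq, Hn.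
  exact (proj1 (Hid e Ge)).
Qed.

Hypothesis Hab : abelian_alg op.

Lemma abelian_lmul_transfer u v c d : u · c = u · d -> v · c = v · d.
Proof. exact (Hab (PMul (PVar A 0) (PVar A 1)) u v (fun _ => c) (fun _ => d)). Qed.

Lemma abelian_mid_transfer u v x1 x2 d1 d2 :
  x1 · u · x2 = d1 · u · d2 -> x1 · v · x2 = d1 · v · d2.
Proof.
  exact (Hab (PMul (PMul (PVar A 1) (PVar A 0)) (PVar A 2)) u v
           (fun k => match k with 0 => x1 | _ => x2 end)
           (fun k => match k with 0 => d1 | _ => d2 end)).
Qed.

(* Transfer [g · z = g · (g · z)] from the left factor [g] to an arbitrary [v]. *)
Lemma mul_idem_l g v z : idempotent op g -> v · z = v · (g · z).
Proof.
  intro Hg. apply (abelian_lmul_transfer g). now rewrite mulA, Hg.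
Qed.

Lemma idempotent_mul e f : idempotent op e -> idempotent op f -> idempotent op (e · f).
Proof.
  intros He Hf. unfold idempotent.
  assert (Hfef : f · (e · f) = f) by now rewrite <- mul_idem_l.
  now rewrite <- (mulA e f), Hfef.
Qed.

Lemma idempotent_eq_of_sandwich e e' f :
  idempotent op e -> idempotent op e' -> idempotent op f ->
  e · f = e' · f -> f · e = f · e' -> e = e'.
Proof.
  intros He He' Hf Hl Hr.
  rewrite <- He, (mul_idem_l f e e Hf), mulA, Hl, <- mulA, Hr.
  now rewrite <- (mul_idem_l f e' e' Hf).
Qed.

Lemma unit_comm e x x' y : idempotent op e -> x · e = x -> x · x' = e -> x' · x = e ->
  e · y = y -> y · e = y -> x · y = y · x.
Proof.
  intros He Hxe Hxx' Hx'x Hey Hye.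
  assert (Hconj : x · y · x' = e · y · e).
  { apply (abelian_mid_transfer e). now rewrite Hxe, Hxx', He, He. }
  rewrite Hey, Hye in Hconj.
  transitivity (x · y · e); [now rewrite <- mulA, Hye|].
  now rewrite <- Hx'x, mulA, Hconj.
Qed.

Section Periodic.

Variable m : A -> nat.
Hypothesis idempotent_power : forall x, idempotent op (spow op x (m x)).

Definition omega x := spow op x (m x).
Definition inv x := spow op x (m x + m x).
Definition retract x := x · omega x.

Lemma omega_idem x : idempotent op (omega x).
Proof. apply idempotent_power. Qed.

Lemma omega_comm x : x · omega x = omega x · x.
Proof. unfold omega. now rewrite spowS_l. Qed.

Lemma spow_double x : spow op x (S (m x + m x)) = omega x.
Proof. rewrite <- Nat.add_succ_r, spowD. apply omega_idem. Qed.

Lemma mul_inv x : x · inv x = omega x.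
Proof. unfold inv. now rewrite spowS_l, spow_double. Qed.

Lemma inv_mul x : inv x · x = omega x.
Proof. exact (spow_double x). Qed.

Lemma omega_of_fixed e y : idempotent op e -> e · y = y -> y · e = y -> omega y = e.
Proof.
  intros He Hey Hye.
  rewrite <- He, (mul_idem_l (omega y) e e (omega_idem y)), mulA.
  unfold omega. now rewrite spow_fix_l, spow_fix_r.
Qed.

Lemma local_monoid_comm e x y : idempotent op e ->
  e · x = x -> x · e = x -> e · y = y -> y · e = y -> x · y = y · x.
Proof.
  intros He Hex Hxe Hey Hye.
  pose proof (omega_of_fixed e x He Hex Hxe) as Hx.
  apply (unit_comm e x (inv x)); rewrite ?mul_inv, ?inv_mul; assumption.
Qed.

Lemma mul_omega_r v y : v · y = v · (y · omega y).
Proof. rewrite omega_comm. apply mul_idem_l, omega_idem. Qed.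

(* With the left factor [omega (x · y) · x] in place of [x] the identity holds, since
   [omega (x · y)] commutes with [x · y]; then transfer. *)
Lemma mul_omega_prod x y : x · y = x · y · omega (x · y).
Proof.
  rewrite <- mulA. apply (abelian_lmul_transfer (omega (x · y) · x)).
  rewrite (mulA (omega (x · y) · x)), <- (mulA (omega (x · y)) x y), <- omega_comm.
  now rewrite <- (mulA (x · y)), omega_idem.
Qed.

Lemma mul_retract x y : x · y = retract x · retract y.
Proof.
  unfold retract. rewrite (mul_omega_r x y), (mul_idem_l (omega x) x).
  - apply mulA.
  - apply omega_idem.
Qed.

(* Inserting [e = omega s] moves [p] and [q] into the commutative local monoid [e A e]. *)
Lemma mul_swap s p q t : s · p · q · t = s · q · p · t.
Proof.
  set (e := omega s). pose proof (omega_idem s) as He; fold e in He.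
  assert (Hins : forall p q, s · p · q · t = s · (e · p · e · (e · q · e)) · t).
  { intros p' q'. rewrite <- !mulA.
    rewrite (mul_idem_l e q' t), (mul_idem_l e p' (q' · (e · t))), (mul_idem_l e s) by exact He.
    rewrite !mulA, <- (mulA (s · e · p') e e), He. reflexivity. }
  assert (Hfix : forall r, e · (e · r · e) = e · r · e /\ e · r · e · e = e · r · e).
  { intro r. split; [now rewrite !mulA, He | now rewrite <- !mulA, He]. }
  rewrite !Hins. do 2 f_equal.
  destruct (Hfix p), (Hfix q). now apply local_monoid_comm with e.
Qed.

(* Expresses [a c' b] through [a c b], [c], [c'] and their inverses only. *)
Lemma mul_mid_replace a b c c' :
  a · c' · b = a · c · b · inv c · c' · (a · c · b) · inv (a · c · b).
Proof.
  rewrite <- (mulA _ (a · c · b) (inv (a · c · b))), mul_inv.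
  rewrite (mul_swap (a · c) b (inv c) c'), (mul_swap (a · c · inv c) b c').
  rewrite <- (mulA a c (inv c)), mul_inv, <- (mulA a (omega c) c').
  rewrite <- (mul_idem_l (omega c)) by apply omega_idem.
  rewrite <- (mulA (a · c') b). apply (abelian_lmul_transfer (a · c)).
  rewrite (mulA (a · c) b). apply mul_omega_prod.
Qed.

Lemma subsemigroup_ctx_replace (C : A -> Prop) c c' s t :
  (forall x y, C x -> C y -> C (x · y)) ->
  C c -> C c' -> C (ctx s c t) -> C (ctx s c' t).
Proof.
  intros Ccl Cc Cc' H.
  assert (Cinv : forall x, C x -> C (inv x)) by (intros; unfold inv; now apply spow_closed).
  destruct s as [a|], t as [b|]; unfold ctx in H |- *; cbv beta iota zeta in H |- *.
  - rewrite (mul_mid_replace a b c c'). auto 10.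
  - assert (E : a · c' = a · c · inv c · c').
    { rewrite <- (mulA a c), mul_inv, <- mulA. apply mul_idem_l, omega_idem. }
    rewrite E. auto.
  - assert (E : c' · b = c' · inv c · (c · b)).
    { rewrite <- mulA, (mulA (inv c) c b), inv_mul. apply mul_idem_l, omega_idem. }
    rewrite E. auto.
  - exact Cc'.
Qed.

Lemma hamiltonian_of_periodic : hamiltonian op.
Proof.
  apply hamiltonian_of_syntactic. intros C [_ Ccl] c c' s t.
  now apply subsemigroup_ctx_replace.
Qed.

Lemma retract_prods x : prods (retract x).
Proof. apply prods_mul. Qed.

Lemma retract_id x : prods x -> retract x = x.
Proof. intros [a [b ->]]. symmetry. apply mul_omega_prod. Qed.

Lemma inflation_prods : inflation_of op prods.
Proof.
  exists retract. split; [exact retract_prods|split; [exact retract_id|exact mul_retract]].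
Qed.

Lemma prods_omega_r x : prods x -> x · omega x = x.
Proof. exact (retract_id x). Qed.

Lemma prods_omega_l x : prods x -> omega x · x = x.
Proof. rewrite <- omega_comm. apply prods_omega_r. Qed.

Lemma omega_prod_l x y f : prods x -> idempotent op f -> omega (x · y) · f = omega x · f.
Proof.
  intros Hx Hf.
  assert (H : omega x · omega (x · y) = omega (x · y)).
  { apply spow_fix_l. now rewrite mulA, prods_omega_l. }
  rewrite (mul_idem_l (omega (x · y)) (omega x) f) by apply omega_idem.
  now rewrite mulA, H.
Qed.

Lemma omega_prod_r x y f : prods y -> idempotent op f -> f · omega (x · y) = f · omega y.
Proof.
  intros Hy Hf.
  assert (H : omega (x · y) · omega y = omega (x · y)).
  { apply spow_fix_r. rewrite <- mulA. change (y · omega y) with (retract y).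
    now rewrite retract_id. }
  now rewrite (mul_idem_l (omega (x · y)) f (omega y)), H by apply omega_idem.
Qed.

Lemma omega_class_group z :
  prods z -> periodic_comm_group (fun x => prods x /\ omega x = omega z).
Proof.
  intro Hz. exists (omega z).
  split; [split|].
  { exists (omega z), (omega z). symmetry. apply omega_idem. }
  { unfold omega at 1. apply spow_idem, omega_idem. }
  split; [intros x [Hx <-]; split; [now apply prods_omega_l|now apply prods_omega_r]|].
  split; [|split].
  - intros x [Hx <-]. exists (inv x).
    split; [split|split; [apply mul_inv|apply inv_mul]].
    + unfold inv. apply spow_closed; [intros; apply prods_mul|exact Hx].
    + apply omega_of_fixed; [apply omega_idem| |].
      * apply spow_fix_l, prods_omega_l, Hx.
      * apply spow_fix_r, prods_omega_r, Hx.
  - intros x y [Hx Ex] [Hy Ey].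
    apply local_monoid_comm with (omega z); [apply omega_idem| | | |].
    1, 2: rewrite <- Ex; auto using prods_omega_l, prods_omega_r.
    all: rewrite <- Ey; auto using prods_omega_l, prods_omega_r.
  - intros x [_ <-]. now exists (m x).
Qed.

Lemma rect_band_prods f : idempotent op f -> rect_band_pcgroups op prods.
Proof.
  intro Hf.
  apply (rect_band_pcgroups_of_index _ _ prods
           (fun x => omega (retract x) · f) (fun x => f · omega (retract x))).
  - intros x y _ _. apply prods_mul.
  - intro x. exists (retract x). rewrite (retract_id (retract x)) by apply retract_prods.
    split; [apply retract_prods|split; reflexivity].
  - intros x y Hx Hy. rewrite !retract_id by (auto using prods_mul).
    split; [now apply omega_prod_l|now apply omega_prod_r].
  - intros z Hz.
    apply periodic_comm_group_ext with (fun x => prods x /\ omega x = omega z);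
      [|now apply omega_class_group].
    intro x. rewrite (retract_id z Hz). split.
    + intros [Hx Ex]. rewrite (retract_id x Hx), Ex. auto.
    + intros [Hx [Hl Hr]]. rewrite (retract_id x Hx) in Hl, Hr. split; [exact Hx|].
      apply idempotent_eq_of_sandwich with f; auto using omega_idem.
Qed.

End Periodic.

End Semigroup.

Theorem mainTheorem19 (A : Type) (op : A -> A -> A)
  (Hne : inhabited A) (Hassoc : associative op) (Hab : abelian_alg op) :
  hamiltonian op <->
  ((exists B : A -> Prop,
      subalgebra op B /\ inflation_of op B /\ rect_band_pcgroups op B) /\
   (forall e f, idempotent op e -> idempotent op f -> idempotent op (op e f))).
Proof.
  split.
  - intro Ham.
    destruct (functional_choice _ (hamiltonian_idempotent_power A op Hassoc Ham)) as [m Hm].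
    destruct Hne as [c].
    split; [|exact (idempotent_mul A op Hassoc Hab)].
    exists (prods A op). split; [exact (subalgebra_prods A op c)|].
    split; [exact (inflation_prods A op Hassoc Hab m Hm)|].
    exact (rect_band_prods A op Hassoc Hab m Hm (omega A op m c) (omega_idem A op m Hm c)).
  - intros [[B [[_ Bcl] [Hinf Hrb]]] _].
    destruct (functional_choice _ (idempotent_power_of_band_inflation A op Hassoc B Bcl Hinf Hrb))
      as [m Hm].
    exact (hamiltonian_of_periodic A op Hassoc Hab m Hm).
Qed.
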